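(* Consider two words $ubav$ and $uabv$ with $a,b \in A$. Let $(x_\ell,y_\ell)$ denote the attribute of position $\ell$ in $ubav$, and let $(x'_\ell,y'_\ell)$ denote the attribute of position $\ell$ in $uabv$. Suppose that $|ub| = i$ and that the attributes $(x_i,y_i)$ and $(x_{i+1},y_{i+1})$ satisfy $x_i = x_{i+1}$. Then all positions $\ell$ satisfy $x'_\ell = x_\ell$.
   Context: $A$ is a finite alphabet. An $\mathsf{X}$-ranker is a nonempty word over $\{\mathsf{X}_a : a\in A\}$ (''go to the next $a$-position'', starting with the first $a$-position) and a $\mathsf{Y}$-ranker a nonempty word over $\{\mathsf{Y}_a : a\in A\}$ (''go to the previous $a$-position'', starting with the last $a$-position). The attribute of position $\ell$ of a word is $(x_\ell,y_\ell)$, where $x_\ell$ (resp. $y_\ell$) is the length of a shortest $\mathsf{X}$-ranker (resp. $\mathsf{Y}$-ranker) reaching $\ell$. *)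

From mathcomp Require Import all_boot.
Set Implicit Arguments. Unset Strict Implicit. Unset Printing Implicit Defensive.

(* Positions of a word w are 1, ..., size w; position q carries nth _ w q.-1.
   Position 0 (resp. size w + 1) is the virtual start point of X- (resp. Y-)rankers. *)
Section Rankers.
Variable A : finType.

(* X_a from position p : the first a-position strictly after p. *)
Definition nextX (w : seq A) (c : A) (p : nat) : option nat :=
  let k := find (pred1 c) (drop p w) in
  if k < size (drop p w) then Some (p + k).+1 else None.

(* Y_a from position p : the last a-position strictly before p. *)
Definition prevY (w : seq A) (c : A) (p : nat) : option nat :=
  let s := rev (take p.-1 w) in
  let k := find (pred1 c) s in
  if k < size s then Some (p.-1 - k) else None.

Definition runX (w : seq A) (r : seq A) : option nat :=
  foldl (fun op c => obind (nextX w c) op) (Some 0) r.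

Definition runY (w : seq A) (r : seq A) : option nat :=
  foldl (fun op c => obind (prevY w c) op) (Some (size w).+1) r.

(* x-attribute: length of a shortest (nonempty) X-ranker reaching position l.
   For 1 <= l <= size w such a ranker of length <= l exists, so the search over
   lengths 1 .. size w finds it. *)
Definition xattr (w : seq A) (l : nat) : nat :=
  (find (fun n => [exists t : n.+1.-tuple A, runX w t == Some l]) (iota 0 (size w))).+1.

Definition yattr (w : seq A) (l : nat) : nat :=
  (find (fun n => [exists t : n.+1.-tuple A, runY w t == Some l]) (iota 0 (size w))).+1.

End Rankers.

From mathcomp Require Import all_boot zify.
Set Implicit Arguments. Unset Strict Implicit. Unset Printing Implicit Defensive.

(* Let s = |u|, so the two swapped letters sit at positions s+1 and s+2.  Since
   x_l <= n iff some X-ranker of length <= n reaches l, it suffices to show that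
   in ubav and in uabv the same positions are reachable in at most n steps.  A
   step X_c from any q other than s+1 lands at the same place in both words up to
   exchanging s+1 and s+2, and the hypothesis x_i = x_{i+1} says precisely that
   the reachable sets of ubav are invariant under this exchange.  From s+1 the
   positions reachable in one step are s+2 and whatever is reachable in one step
   from s+2, in both words.  Induction on n then identifies the reachable sets. *)

Lemma find_iota_ltn (P : pred nat) N n :
  has P (iota 0 N) -> (find P (iota 0 N) < n) = has P (iota 0 n).
Proof.
move=> hasP_N; apply/idP/hasP => [lt_n | [j]].
- have lt_N : find P (iota 0 N) < N by rewrite -[N in _ < N](size_iota 0) -has_find.
  exists (find P (iota 0 N)); first by rewrite mem_iota.
  by have := nth_find 0 hasP_N; rewrite nth_iota.
- rewrite mem_iota add0n => lt_jn Pj; apply: leq_ltn_trans lt_jn.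
  rewrite leqNgt; apply/negP => lt_j.
  have lt_jN : j < N.
    by apply: leq_trans lt_j _; rewrite -[N in _ <= N](size_iota 0) find_size.
  by have := before_find 0 lt_j; rewrite nth_iota // add0n Pj.
Qed.

Definition swap_pos (s l : nat) : nat :=
  if l == s.+1 then s.+2 else if l == s.+2 then s.+1 else l.

Lemma swap_posK s : involutive (swap_pos s).
Proof.
move=> l; rewrite /swap_pos.
have [->|ne1] := eqVneq l s.+1; first by rewrite eqxx eqSS (gtn_eqF (ltnSn s)).
have [->|ne2] := eqVneq l s.+2; first by rewrite eqxx.
by rewrite (negbTE ne1) (negbTE ne2).
Qed.

Lemma swap_pos_out s l : (l <= s) || (s.+2 < l) -> swap_pos s l = l.
Proof.
move=> out_l; rewrite /swap_pos.
have [eq1|_] := eqVneq l s.+1; first by move: out_l; rewrite eq1; lia.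
have [eq2|//] := eqVneq l s.+2.
by move: out_l; rewrite eq2; lia.
Qed.

Section NextPosition.
Variable A : finType.
Implicit Types (w : seq A) (c : A).

Lemma nextX_bounds w c q l : nextX w c q = Some l -> q < l <= size w.
Proof.
rewrite /nextX size_drop; case: ifP => // lt_find [<-].
move: lt_find; set k := find _ _; lia.
Qed.

Lemma nextX_drop w1 w2 c q : drop q w1 = drop q w2 -> nextX w1 c q = nextX w2 c q.
Proof. by rewrite /nextX => ->. Qed.

Lemma nextX_nth w x0 c q : q < size w ->
  nextX w c q = if nth x0 w q == c then Some q.+1 else nextX w c q.+1.
Proof.
move=> lt_q; rewrite /nextX (drop_nth x0 lt_q) /=.
by case: eqP => _; rewrite ?addn0 // ltnS addnS addSn.
Qed.

Lemma nextX_cat w1 w2 c q : q <= size w1 ->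
  nextX (w1 ++ w2) c q =
  if has (pred1 c) (drop q w1) then nextX w1 c q
  else omap (addn (size w1)) (nextX w2 c 0).
Proof.
move=> le_q; have drop_q : drop q (w1 ++ w2) = drop q w1 ++ w2.
  rewrite drop_cat; case: ltnP => // ge_q.
  have -> : q = size w1 by apply/eqP; rewrite eqn_leq le_q.
  by rewrite subnn drop0 drop_size.
rewrite /nextX drop_q find_cat size_cat drop0.
have [has_c|_] := boolP (has (pred1 c) (drop q w1)).
  by move: (has_c); rewrite has_find => lt_find; rewrite lt_find ltn_addr.
rewrite ltn_add2l; case: ifP => //= _.
by congr Some; rewrite size_drop; lia.
Qed.

End NextPosition.

Section Reachability.
Variable A : finType.
Implicit Types (w r : seq A) (c : A).

(* Unlike in [xattr], the empty ranker is allowed here; it reaches the virtual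
   position 0. *)
Definition reachX w (n l : nat) : Prop := exists2 r, size r <= n & runX w r = Some l.

Lemma runX_rcons w r c : runX w (rcons r c) = obind (nextX w c) (runX w r).
Proof. by rewrite /runX foldl_rcons. Qed.

Lemma runX_take w l : l <= size w -> runX w (take l w) = Some l.
Proof.
elim: l => [|l IHl] lt_l; first by rewrite take0.
case: w IHl lt_l => // x0 w' IHl lt_l.
rewrite (take_nth x0) // runX_rcons IHl ?(ltnW lt_l) //=.
by rewrite (nextX_nth x0) // eqxx.
Qed.

Lemma reachX0 w l : reachX w 0 l -> l = 0.
Proof. by case=> r; rewrite leqn0 => /nilP -> [<-]. Qed.

Lemma reachX_start w n : reachX w n 0.
Proof. by exists [::]. Qed.

Lemma reachXW w n l : reachX w n l -> reachX w n.+1 l.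
Proof. by case=> r le_r run_r; exists r; first exact: leqW. Qed.

Lemma reachX_step w n q c l :
  reachX w n q -> nextX w c q = Some l -> reachX w n.+1 l.
Proof.
case=> r le_r run_r next_q; exists (rcons r c); first by rewrite size_rcons.
by rewrite runX_rcons run_r.
Qed.

Lemma reachXS_inv w n l : reachX w n.+1 l ->
  l = 0 \/ exists q c, reachX w n q /\ nextX w c q = Some l.
Proof.
case=> r; case/lastP: r => [_ [<-]|r c]; first by left.
rewrite size_rcons ltnS runX_rcons => le_r.
case run_r: (runX w r) => [q|] //= next_q.
by right; exists q, c; split => //; exists r.
Qed.

Lemma xattr_leP w l n : 0 < l <= size w -> xattr w l <= n <-> reachX w n l.
Proof.
case/andP=> l_gt0 le_l.
pose P j := [exists t : j.+1.-tuple A, runX w t == Some l].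
have PP j : reflect (exists2 r, size r = j.+1 & runX w r = Some l) (P j).
  apply: (iffP existsP) => [[t /eqP run_t] | [r /eqP size_r run_r]].
    by exists t; rewrite ?size_tuple.
  by exists (Tuple size_r); apply/eqP.
have has_N : has P (iota 0 (size w)).
  apply/hasP; exists l.-1; first by rewrite mem_iota; lia.
  by apply/PP; exists (take l w); rewrite ?size_takel ?prednK ?runX_take.
rewrite /xattr -/P [_ < n]find_iota_ltn //.
split=> [/hasP[j] | [r le_r run_r]].
  by rewrite mem_iota => lt_j /PP[r size_r run_r]; exists r; rewrite ?size_r.
have size_gt0 : 0 < size r by case: r run_r {le_r} => // -[l0]; rewrite -l0 in l_gt0.
apply/hasP; exists (size r).-1; first by rewrite mem_iota; lia.
by apply/PP; exists r; rewrite ?prednK.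
Qed.

End Reachability.

Section SwapAdjacent.
Variables (A : finType) (u v : seq A).
Implicit Types (c x y : A).

Lemma nextX_swap_far x y c q : (size u).+2 <= q ->
  nextX (u ++ y :: x :: v) c q = nextX (u ++ x :: y :: v) c q.
Proof.
move=> le_q.
have lt_q : (q < size u) = false by apply/negbTE; rewrite -leqNgt; lia.
apply: nextX_drop; rewrite !(drop_cat q u) lt_q.
by have -> : q - size u = (q - (size u).+2).+2 by lia.
Qed.

Lemma nextX_swap_prefix x y c q : x != y -> q <= size u ->
  nextX (u ++ y :: x :: v) c q = omap (swap_pos (size u)) (nextX (u ++ x :: y :: v) c q).
Proof.
move=> neq_xy le_q; rewrite !(nextX_cat _ _ le_q); case: ifP => _.
  case E: (nextX u c q) => [l|] //=; rewrite swap_pos_out //.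
  by have /andP[_ ->] := nextX_bounds E.
rewrite !(@nextX_nth _ (y :: x :: v) x c 0, @nextX_nth _ (y :: x :: v) x c 1,
          @nextX_nth _ (x :: y :: v) x c 0, @nextX_nth _ (x :: y :: v) x c 1) //=.
rewrite (@nextX_drop _ (y :: x :: v) (x :: y :: v) c 2 erefl).
have [<-|ne_yc] := eqVneq y c.
  by rewrite /= (negbTE neq_xy) /= /swap_pos addn1 addn2 eqxx eqSS (gtn_eqF (ltnSn _)).
have [_|_] := eqVneq x c; first by rewrite /= /swap_pos addn1 addn2 eqxx.
case E: (nextX _ c 2) => [l|] //=; rewrite swap_pos_out //.
by have := nextX_bounds E; lia.
Qed.

Lemma nextX_swap x y c q : x != y -> q != (size u).+1 ->
  nextX (u ++ y :: x :: v) c q = omap (swap_pos (size u)) (nextX (u ++ x :: y :: v) c q).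
Proof.
move=> neq_xy; case: ltngtP => // [lt_q | gt_q] _; first exact: nextX_swap_prefix.
rewrite nextX_swap_far //; case E: (nextX _ c q) => [l|] //=; rewrite swap_pos_out //.
by have := nextX_bounds E; lia.
Qed.

Lemma nextX_swap_mid x y c :
  nextX (u ++ x :: y :: v) c (size u).+1 =
  if y == c then Some (size u).+2 else nextX (u ++ y :: x :: v) c (size u).+2.
Proof.
rewrite (nextX_nth x); last by rewrite size_cat /=; lia.
by rewrite nth_cat ltnNge leqnSn subSnn nextX_swap_far.
Qed.

Lemma reachX_swap_step x y n : x != y ->
  (forall l, reachX (u ++ x :: y :: v) n l -> reachX (u ++ y :: x :: v) n l) ->
  (reachX (u ++ x :: y :: v) n (size u).+1 -> reachX (u ++ y :: x :: v) n (size u).+2) ->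
  forall l, reachX (u ++ x :: y :: v) n.+1 l ->
    reachX (u ++ y :: x :: v) n.+1 (swap_pos (size u) l).
Proof.
move=> neq_xy sub mid l /reachXS_inv [-> | [q [c [reach_q next_q]]]].
  by rewrite swap_pos_out //; apply: reachX_start.
have [eq_q | ne_q] := eqVneq q (size u).+1; last first.
  by apply: (reachX_step (c := c) (sub _ reach_q)); rewrite nextX_swap // next_q.
move: next_q; rewrite eq_q nextX_swap_mid in reach_q *.
case: eqP => [_ [<-] | _ next_q].
  rewrite /swap_pos eqSS (gtn_eqF (ltnSn _)) eqxx.
  exact/reachXW/sub.
rewrite swap_pos_out; first exact: reachX_step (mid reach_q) next_q.
by have := nextX_bounds next_q; lia.
Qed.

Lemma reachX_swap x y : x != y ->
  (forall n, reachX (u ++ x :: y :: v) n (size u).+1 <-> reachX (u ++ x :: y :: v) n (size u).+2) ->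
  forall n l, reachX (u ++ x :: y :: v) n l <-> reachX (u ++ y :: x :: v) n l.
Proof.
move=> neq_xy reach12.
have reach_swap n l : reachX (u ++ x :: y :: v) n (swap_pos (size u) l) <-> reachX (u ++ x :: y :: v) n l.
  rewrite /swap_pos; case: eqP => [-> | _]; first by rewrite reach12.
  by case: eqP => [-> | _] //; rewrite reach12.
elim=> [|n IHn] l.
  by split=> /reachX0 ->; apply: reachX_start.
split=> [reach_l | reach'_l].
  rewrite -[l](swap_posK (size u)).
  apply: reachX_swap_step neq_xy _ _ _ _ => [m /IHn // | /reach12 /IHn // |].
  exact/reach_swap.
apply/reach_swap; apply: reachX_swap_step _ _ _ _ reach'_l; first by rewrite eq_sym.
  by move=> m /IHn.
by move=> /IHn /reach12.
Qed.

End SwapAdjacent.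

Theorem lemma10 (A : finType) (u v : seq A) (a b : A) (i : nat) :
  size (u ++ [:: b]) = i ->
  xattr (u ++ b :: a :: v) i = xattr (u ++ b :: a :: v) i.+1 ->
  forall l : nat, 1 <= l <= size (u ++ b :: a :: v) ->
    xattr (u ++ a :: b :: v) l = xattr (u ++ b :: a :: v) l.
Proof.
rewrite size_cat addn1 => <- eq_x l range_l.
have [-> // | neq_ba] := eqVneq b a.
have size_swap : size (u ++ a :: b :: v) = size (u ++ b :: a :: v) by rewrite !size_cat.
have reach12 n : reachX (u ++ b :: a :: v) n (size u).+1 <-> reachX (u ++ b :: a :: v) n (size u).+2.
  by rewrite -!xattr_leP ?eq_x //; rewrite size_cat /=; lia.
have le_x k : xattr (u ++ a :: b :: v) l <= k <-> xattr (u ++ b :: a :: v) l <= k.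
  by rewrite !xattr_leP ?size_swap // (reachX_swap neq_ba reach12).
by apply/anti_leq/andP; split; [apply/le_x | apply/le_x].
Qed.
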